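(* Let $(V,g)$ be a Euclidean vector space of dimension $n\ge3$, $N=\frac{(n-1)(n+2)}{2}$. (1) If $1\le\alpha_1\le\alpha_2<N$ and $\theta>-1$, then $\mathcal{C}(\alpha_1,\theta)\subset\mathcal{C}(\alpha_2,\theta)$. (2) If $\alpha\in[1,N)$ and $-1<\theta_1\le\theta_2$, then $\mathcal{C}(\alpha,\theta_1)\subset\mathcal{C}(\alpha,\theta_2)$.
   Context: $S^2_0(V)$ is the space of traceless symmetric two-tensors on $V$ (dimension $N$). For a symmetric operator on $S^2_0(V)$ with eigenvalues $\lambda_1\le\cdots\le\lambda_N$ and average $\bar\lambda$, write $\lambda_1+\cdots+\lambda_\alpha:=\lambda_1+\cdots+\lambda_{[\alpha]}+(\alpha-[\alpha])\lambda_{[\alpha]+1}$; $\mathcal{C}(\alpha,\theta)$ is the cone of symmetric operators on $S^2_0(V)$ with $\alpha^{-1}(\lambda_1+\cdots+\lambda_\alpha)\ge-\theta\bar\lambda$. (In the paper these cones are considered for operators $\mathring{R}$ induced by algebraic curvature tensors.) *)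

From HB Require Import structures.
From mathcomp Require Import all_boot all_order all_algebra.
From mathcomp Require Import all_classical all_reals.
Set Implicit Arguments. Unset Strict Implicit. Unset Printing Implicit Defensive.
Import Order.TTheory GRing.Theory Num.Theory.
Local Open Scope ring_scope.

(* N = (n-1)(n+2)/2 = dim S^2_0(V) for dim V = n. *)
Definition dimS20 (n : nat) : nat := ((n.-1 * (n + 2))./2)%N.

Definition sorted_eigenvalues (R : realType) (N : nat) (A : 'M[R]_N)
    (lam : seq R) : Prop :=
  [/\ size lam = N, sorted <=%R lam &
      exists P : 'M[R]_N, P *m P^T = 1%:M /\
        A = P^T *m diag_mx (\row_(i < N) lam`_i) *m P].

(* lambda_1 + ... + lambda_alpha := lambda_1 + ... + lambda_[alpha]
   + (alpha - [alpha]) lambda_{[alpha]+1}   (1-based in the paper,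
   0-based indices here). *)
Definition frac_partial_sum (R : realType) (lam : seq R) (alpha : R) : R :=
  let k := Num.truncn alpha in
  \sum_(i < k) lam`_i + (alpha - k%:R) * lam`_k.

Definition mean_eig (R : realType) (lam : seq R) : R :=
  (\sum_(x <- lam) x) / (size lam)%:R.

(* The cone C(alpha, theta) of symmetric operators on S^2_0(V), written in an
   orthonormal basis of S^2_0(V) (so symmetric operators = symmetric matrices). *)
Definition cone (R : realType) (N : nat) (alpha theta : R) (A : 'M[R]_N)
    : Prop :=
  A^T = A /\
  exists lam : seq R, sorted_eigenvalues A lam /\
    alpha^-1 * frac_partial_sum lam alpha >= - theta * mean_eig lam.

From HB Require Import structures.
From mathcomp Require Import all_boot all_order all_algebra.
From mathcomp Require Import all_classical all_reals.
From mathcomp Require Import lra.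
Import Order.TTheory GRing.Theory Num.Theory.
Local Open Scope ring_scope.

(* For sorted eigenvalues, the fractional average
   alpha^-1 (lambda_1 + ... + lambda_alpha) is nondecreasing in alpha:
   increasing alpha only adds eigenvalues that are at least lambda_{[alpha]+1},
   which itself dominates the current average.  At alpha = N this average is
   the mean, so the condition defining C(alpha, theta) gets weaker as alpha
   grows; it also forces (1 + theta) mean >= 0, hence mean >= 0 when
   theta > -1, and then it gets weaker as theta grows. *)

Definition frac_partial_mean {R : realType} (lam : seq R) (alpha : R) : R :=
  alpha^-1 * frac_partial_sum lam alpha.

Section SortedEigenvalues.

Context {R : realType} {lam : seq R}.
Hypothesis lam_sorted : sorted <=%R lam.

Lemma sorted_ler_nth {i j : nat} :
  (i <= j)%N -> (j < size lam)%N -> lam`_i <= lam`_j.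
Proof.
move=> le_ij lt_j; apply: (sorted_leq_nth le_trans lexx 0 lam_sorted) => //.
by rewrite inE (leq_ltn_trans le_ij).
Qed.

Lemma sum_prefix_ge {k1 k2 : nat} : (k1 <= k2)%N -> (k2 <= size lam)%N ->
  \sum_(i < k1) lam`_i + (k2 - k1)%:R * lam`_k1 <= \sum_(i < k2) lam`_i.
Proof.
move=> le_k12 le_k2.
rewrite -!(big_mkord xpredT (fun i => lam`_i)) (big_cat_nat (leq0n k1) le_k12) /=.
rewrite lerD2l mulr_natl -sumr_const_nat.
apply: ler_sum_nat => i /andP[le_k1i lt_ik2]; apply: sorted_ler_nth => //.
exact: leq_trans lt_ik2 le_k2.
Qed.

Lemma frac_partial_sum_le {a : R} : 0 <= a -> (Num.truncn a < size lam)%N ->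
  frac_partial_sum lam a <= a * lam`_(Num.truncn a).
Proof.
move=> a_ge0 lt_k; rewrite /frac_partial_sum.
have ka : (Num.truncn a)%:R <= a by rewrite truncn_le.
have : \sum_(i < Num.truncn a) lam`_i <= (Num.truncn a)%:R * lam`_(Num.truncn a).
  rewrite -[in X in X * _](card_ord (Num.truncn a)) mulr_natl -sumr_const.
  by apply: ler_sum => i _; apply: sorted_ler_nth (ltnW (ltn_ord i)) lt_k.
lra.
Qed.

Lemma frac_partial_sum_increment {a1 a2 : R} :
  0 <= a1 -> a1 <= a2 -> a2 <= (size lam)%:R ->
  (Num.truncn a1 < size lam)%N ->
  frac_partial_sum lam a1 + (a2 - a1) * lam`_(Num.truncn a1)
    <= frac_partial_sum lam a2.
Proof.
move=> a1_ge0 le_a12 le_a2 lt_k1; rewrite /frac_partial_sum.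
set k1 := Num.truncn a1; set k2 := Num.truncn a2.
have k1a : k1%:R <= a1 by rewrite truncn_le.
have k2a : k2%:R <= a2 by rewrite truncn_le (le_trans a1_ge0).
have le_k12 : (k1 <= k2)%N by apply: le_truncn.
have le_k2 : (k2 <= size lam)%N by rewrite truncn_le_nat (le_lt_trans le_a2) ?ltr_nat.
have prefix := sum_prefix_ge le_k12 le_k2; rewrite natrB // in prefix.
have tail : (a2 - k2%:R) * lam`_k1 <= (a2 - k2%:R) * lam`_k2.
  have [eq_k2|ne_k2] := eqVneq k2 (size lam).
    suff -> : a2 = k2%:R by rewrite subrr !mul0r.
    by apply/le_anti; rewrite k2a eq_k2 le_a2.
  by rewrite ler_wpM2l ?subr_ge0 // sorted_ler_nth // ltn_neqAle ne_k2.
lra.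
Qed.

Lemma frac_partial_mean_mono (a1 a2 : R) :
  0 < a1 -> a1 <= a2 -> a2 <= (size lam)%:R ->
  frac_partial_mean lam a1 <= frac_partial_mean lam a2.
Proof.
move=> a1_gt0 le_a12 le_a2.
have [eq_a12|ne_a12] := eqVneq a1 a2; first by rewrite eq_a12.
have lt_k1 : (Num.truncn a1 < size lam)%N.
  by rewrite truncn_lt_nat ?ltW // (lt_le_trans _ le_a2) // lt_neqAle ne_a12.
have a2_gt0 : 0 < a2 by apply: lt_le_trans le_a12.
have inc := frac_partial_sum_increment (ltW a1_gt0) le_a12 le_a2 lt_k1.
have top := frac_partial_sum_le (ltW a1_gt0) lt_k1.
rewrite /frac_partial_mean ler_pdivrMl // mulrCA ler_pdivlMl //.
nra.
Qed.

End SortedEigenvalues.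

Lemma frac_partial_mean_size (R : realType) (lam : seq R) :
  frac_partial_mean lam (size lam)%:R = mean_eig lam.
Proof.
rewrite /frac_partial_mean /frac_partial_sum /mean_eig natrK subrr mul0r addr0.
by rewrite (big_nth 0) big_mkord mulrC.
Qed.

Lemma cone_weaken (R : realType) (N : nat) (a1 t1 a2 t2 : R) (A : 'M[R]_N) :
  (forall lam : seq R, size lam = N -> sorted <=%R lam ->
     - t1 * mean_eig lam <= frac_partial_mean lam a1 ->
     - t2 * mean_eig lam <= frac_partial_mean lam a2) ->
  cone a1 t1 A -> cone a2 t2 A.
Proof.
move=> weaken [symA [lam [[size_lam sorted_lam diagA] cond]]].
split=> //; exists lam; split; first by split.
exact: weaken.
Qed.

Theorem proposition2p8 (R : realType) (n : nat) (hn : (3 <= n)%N) :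
  (forall (a1 a2 theta : R), 1 <= a1 -> a1 <= a2 -> a2 < (dimS20 n)%:R ->
     -1 < theta ->
     forall A : 'M[R]_(dimS20 n), cone a1 theta A -> cone a2 theta A) /\
  (forall (a t1 t2 : R), 1 <= a -> a < (dimS20 n)%:R ->
     -1 < t1 -> t1 <= t2 ->
     forall A : 'M[R]_(dimS20 n), cone a t1 A -> cone a t2 A).
Proof.
split.
  move=> a1 a2 theta ge1_a1 le_a12 lt_a2 _ A; apply: cone_weaken.
  move=> lam size_lam sorted_lam cond; apply: le_trans cond _.
  apply: (frac_partial_mean_mono sorted_lam) le_a12 _.
  - exact: lt_le_trans ltr01 ge1_a1.
  - by rewrite size_lam ltW.
move=> a t1 t2 ge1_a lt_a gt_t1 le_t12 A; apply: cone_weaken.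
move=> lam size_lam sorted_lam cond.
have le_mean : frac_partial_mean lam a <= mean_eig lam.
  rewrite -frac_partial_mean_size; apply: (frac_partial_mean_mono sorted_lam).
  - exact: lt_le_trans ltr01 ge1_a.
  - by rewrite size_lam ltW.
  - exact: lexx.
have mean_ge0 : 0 <= mean_eig lam by nra.
apply: le_trans cond; rewrite !mulNr lerN2; exact: ler_wpM2r.
Qed.
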